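(* Let $\Omega\subset\mathbb{C}^n$ be a bounded domain, let $\mathcal R$ and $\mathcal R'$ be quasi-free Hilbert modules of rank $m$ over $A(\Omega)$ with generating sets $\{f_i\}_{i=1}^m$ and $\{g_i\}_{i=1}^m$, and let $X:\mathcal R\to\mathcal R'$ be a module map with $Xf_i=\sum_{j=1}^m\psi_{ij}g_j$ for $1\le i\le m$, where $\Psi=(\psi_{ij})\in\mathrm{Hol}_m(\Omega)$. Then for every $z\in\Omega$ and $1\le i\le m$, \[(X\otimes_{A(\Omega)}1_{\mathbb C_z})(f_i\otimes_{A(\Omega)}1_z)=\sum_{j=1}^m\psi_{ij}(z)\,(g_j\otimes_{A(\Omega)}1_z).\]
   Context: $A(\Omega)$ is the closure, in the supremum norm on $\Omega$, of the set of functions holomorphic on some neighbourhood of $\overline\Omega$; $\ell^2_m$ is the $m$-dimensional Hilbert space ($m$ finite) and $\mathrm{Hol}_m(\Omega)$ is the space of holomorphic $\mathcal L(\ell^2_m)$-valued functions on $\Omega$. A quasi-free Hilbert module of rank $m$ over $A(\Omega)$ is a Hilbert space $\mathcal R$ obtained as the completion of $A(\Omega)\otimes\ell^2_m$ (regarded as $\ell^2_m$-valued holomorphic functions on $\Omega$) with respect to an inner product such that: (1) for each $z\in\Omega$ evaluation at $z$ is bounded, with norm locally uniformly bounded in $z$; (2) $\|\varphi F\|_{\mathcal R}\le\|\varphi\|_{A(\Omega)}\|F\|_{\mathcal R}$; (3) if $(F_i)$ is Cauchy in $\mathcal R$-norm, then $F_i(z)\to0$ for all $z$ iff $\|F_i\|_{\mathcal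 R}\to0$. $A(\Omega)$ acts by multiplication. For $z\in\Omega$, $\mathbb C_z$ is $\mathbb C$ with action $\varphi\cdot\lambda=\varphi(z)\lambda$; the localization $\mathcal R\otimes_{A(\Omega)}\mathbb C_z$ is identified with $\mathcal R/\mathcal R_z$, $\mathcal R_z$ the closure of $\{\varphi h:\varphi\in A(\Omega),\varphi(z)=0,h\in\mathcal R\}$; $h\otimes 1_z$ is the class of $h$, and $X\otimes1_{\mathbb C_z}$ is the induced map $h\otimes1_z\mapsto Xh\otimes1_z$. A generating set is $\{f_1,\dots,f_m\}\subset\mathcal R$ whose $A(\Omega)$-multiples span a dense subspace and with $\{f_i\otimes1_z\}$ a basis of $\mathcal R\otimes_{A(\Omega)}\mathbb C_z$ for each $z$. A module map is a bounded linear $X$ with $X(\varphi h)=\varphi X(h)$. *)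

From HB Require Import structures.
From mathcomp Require Import all_boot all_order all_algebra.
From mathcomp Require Import reals.
From mathcomp Require Import complex.
Set Implicit Arguments. Unset Strict Implicit. Unset Printing Implicit Defensive.
Import Order.TTheory GRing.Theory Num.Theory.
Local Open Scope ring_scope.
Local Open Scope complex_scope.

Definition cabs (R : realType) (z : R[i]) : R :=
  Num.sqrt (complex.Re z ^+ 2 + complex.Im z ^+ 2).

Definition vnorm (R : realType) (k : nat) (v : 'rV[R[i]]_k) : R :=
  Num.sqrt (\sum_(j < k) cabs (v 0 j) ^+ 2).

Definition cn_open (R : realType) (n : nat) (U : 'rV[R[i]]_n -> Prop) : Prop :=
  forall z, U z -> exists r : R, 0 < r /\ forall w, vnorm (w - z) < r -> U w.

Definition cn_closure (R : realType) (n : nat) (U : 'rV[R[i]]_n -> Prop)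
  (w : 'rV[R[i]]_n) : Prop :=
  forall r : R, 0 < r -> exists z, U z /\ vnorm (w - z) < r.

Definition cn_connected (R : realType) (n : nat) (U : 'rV[R[i]]_n -> Prop) : Prop :=
  forall A B : 'rV[R[i]]_n -> Prop, cn_open A -> cn_open B ->
    (forall z, U z -> A z \/ B z) ->
    (forall z, U z -> A z -> B z -> False) ->
    (forall z, U z -> ~ A z) \/ (forall z, U z -> ~ B z).

Definition bounded_domain (R : realType) (n : nat) (U : 'rV[R[i]]_n -> Prop) : Prop :=
  [/\ exists z, U z, cn_open U, cn_connected U
    & exists M : R, forall z, U z -> vnorm z <= M].

Definition holo_at (R : realType) (n : nat) (f : 'rV[R[i]]_n -> R[i])
  (z : 'rV[R[i]]_n) : Prop :=
  exists d : 'rV[R[i]]_n, forall e : R, 0 < e -> exists del : R, 0 < del /\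
    forall h : 'rV[R[i]]_n, vnorm h < del ->
      cabs (f (z + h) - f z - \sum_(k < n) d 0 k * h 0 k) <= e * vnorm h.

Definition holo_on (R : realType) (n : nat) (U : 'rV[R[i]]_n -> Prop)
  (f : 'rV[R[i]]_n -> R[i]) : Prop := forall z, U z -> holo_at f z.

(* Hol_m(Omega): L(l^2_m)-valued holomorphic functions = m x m matrices of
   holomorphic functions *)
Definition Hol_m (R : realType) (n m : nat) (Om : 'rV[R[i]]_n -> Prop)
  (Psi : 'I_m -> 'I_m -> 'rV[R[i]]_n -> R[i]) : Prop :=
  forall i j, holo_on Om (Psi i j).

Definition in_A (R : realType) (n : nat) (Om : 'rV[R[i]]_n -> Prop)
  (phi : 'rV[R[i]]_n -> R[i]) : Prop :=
  forall e : R, 0 < e -> exists (U : 'rV[R[i]]_n -> Prop) (g : 'rV[R[i]]_n -> R[i]),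
    [/\ cn_open U, (forall w, cn_closure Om w -> U w), holo_on U g
      & forall z, Om z -> cabs (phi z - g z) <= e].

(* M bounds the supremum norm of phi on Omega: ||phi||_{A(Omega)} <= M *)
Definition supbound (R : realType) (n : nat) (Om : 'rV[R[i]]_n -> Prop)
  (phi : 'rV[R[i]]_n -> R[i]) (M : R) : Prop :=
  forall z, Om z -> cabs (phi z) <= M.

Definition hnorm (R : realType) (H : lmodType R[i]) (ip : H -> H -> R[i]) (x : H) : R :=
  Num.sqrt (complex.Re (ip x x)).

Definition is_hilbert (R : realType) (H : lmodType R[i]) (ip : H -> H -> R[i]) : Prop :=
  [/\ (forall (a : R[i]) (x y w : H), ip (a *: x + y) w = a * ip x w + ip y w),
      (forall x y : H, ip x y = (ip y x)^*),
      (forall x : H, 0 <= ip x x),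
      (forall x : H, ip x x = 0 -> x = 0)
    &
      forall u : nat -> H,
        (forall e : R, 0 < e -> exists N, forall p q, (N <= p)%N -> (N <= q)%N ->
           hnorm ip (u p - u q) < e) ->
        exists x : H, forall e : R, 0 < e -> exists N, forall p, (N <= p)%N ->
           hnorm ip (u p - x) < e].

(* The Hilbert space H is the completion; ev h is the l^2_m-valued function on
   Omega representing h (ev is defined on all of H, i.e. evaluation extended
   to the completion). *)

(* h' = phi . h  (module action, as functions on Omega) *)
Definition act (R : realType) (n m : nat) (Om : 'rV[R[i]]_n -> Prop)
  (H : lmodType R[i]) (ev : H -> 'rV[R[i]]_n -> 'rV[R[i]]_m)
  (phi : 'rV[R[i]]_n -> R[i]) (h h' : H) : Prop :=
  forall z, Om z -> ev h' z = phi z *: ev h z.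

(* h belongs to the pre-space A(Omega) (x) l^2_m *)
Definition in_pre (R : realType) (n m : nat) (Om : 'rV[R[i]]_n -> Prop)
  (H : lmodType R[i]) (ev : H -> 'rV[R[i]]_n -> 'rV[R[i]]_m) (h : H) : Prop :=
  forall j : 'I_m, in_A Om (fun z => ev h z 0 j).

Definition is_qfhm (R : realType) (n m : nat) (Om : 'rV[R[i]]_n -> Prop)
  (H : lmodType R[i]) (ip : H -> H -> R[i])
  (ev : H -> 'rV[R[i]]_n -> 'rV[R[i]]_m) : Prop :=
  is_hilbert ip /\
      (forall (a : R[i]) (x y : H) z, ev (a *: x + y) z = a *: ev x z + ev y z) /\
      (* every element of A(Omega) (x) l^2_m is an element of H ... *)
      (forall F : 'rV[R[i]]_n -> 'rV[R[i]]_m,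
         (forall j : 'I_m, in_A Om (fun z => F z 0 j)) ->
         exists h : H, forall z, Om z -> ev h z = F z) /\
      (* ... and these are dense (H is the completion) *)
      (forall (h : H) (e : R), 0 < e -> exists h' : H, in_pre Om ev h' /\ hnorm ip (h - h') < e) /\
      (forall z, Om z -> exists (r c : R), 0 < r /\ forall w, Om w -> vnorm (w - z) < r ->
          forall h : H, vnorm (ev h w) <= c * hnorm ip h) /\
      (forall phi (h : H), in_A Om phi -> exists h' : H, act Om ev phi h h' /\
          forall M : R, supbound Om phi M -> hnorm ip h' <= M * hnorm ip h) /\
      (forall u : nat -> H, (forall k, in_pre Om ev (u k)) ->
        (forall e : R, 0 < e -> exists N, forall p q, (N <= p)%N -> (N <= q)%N ->
           hnorm ip (u p - u q) < e) ->
        ((forall z, Om z -> forall e : R, 0 < e -> exists N, forall p, (N <= p)%N ->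
            vnorm (ev (u p) z) < e) <->
         (forall e : R, 0 < e -> exists N, forall p, (N <= p)%N -> hnorm ip (u p) < e))).

(* R_z: the closure of the linear span of {phi h : phi in A(Omega), phi(z)=0, h in H} *)
Definition in_Rz (R : realType) (n m : nat) (Om : 'rV[R[i]]_n -> Prop)
  (H : lmodType R[i]) (ip : H -> H -> R[i]) (ev : H -> 'rV[R[i]]_n -> 'rV[R[i]]_m)
  (z : 'rV[R[i]]_n) (h : H) : Prop :=
  forall e : R, 0 < e -> exists (k : nat) (phi : 'I_k -> 'rV[R[i]]_n -> R[i])
      (c : 'I_k -> R[i]) (g g' : 'I_k -> H),
    (forall l, [/\ in_A Om (phi l), phi l z = 0 & act Om ev (phi l) (g l) (g' l)]) /\
    hnorm ip (h - \sum_(l < k) c l *: g' l) < e.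

(* generating set {f_i}: A(Omega)-multiples span a dense subspace, and the
   classes f_i (x) 1_z form a basis of R (x)_{A(Omega)} C_z = R / R_z *)
Definition is_generating (R : realType) (n m : nat) (Om : 'rV[R[i]]_n -> Prop)
  (H : lmodType R[i]) (ip : H -> H -> R[i]) (ev : H -> 'rV[R[i]]_n -> 'rV[R[i]]_m)
  (f : 'I_m -> H) : Prop :=
  [/\ (forall (h : H) (e : R), 0 < e -> exists (k : nat)
          (phi : 'I_k -> 'rV[R[i]]_n -> R[i]) (c : 'I_k -> R[i])
          (idx : 'I_k -> 'I_m) (g' : 'I_k -> H),
        (forall l, in_A Om (phi l) /\ act Om ev (phi l) (f (idx l)) (g' l)) /\
        hnorm ip (h - \sum_(l < k) c l *: g' l) < e),
      (forall z, Om z -> forall c : 'I_m -> R[i],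
          in_Rz Om ip ev z (\sum_(i < m) c i *: f i) -> forall i, c i = 0)
    & (forall z, Om z -> forall h : H, exists c : 'I_m -> R[i],
          in_Rz Om ip ev z (h - \sum_(i < m) c i *: f i))].

Definition is_module_map (R : realType) (n m : nat) (Om : 'rV[R[i]]_n -> Prop)
  (H : lmodType R[i]) (ip : H -> H -> R[i]) (ev : H -> 'rV[R[i]]_n -> 'rV[R[i]]_m)
  (H' : lmodType R[i]) (ip' : H' -> H' -> R[i]) (ev' : H' -> 'rV[R[i]]_n -> 'rV[R[i]]_m)
  (X : H -> H') : Prop :=
  [/\ (forall (a : R[i]) (x y : H), X (a *: x + y) = a *: X x + X y),
      (exists c : R, forall h : H, hnorm ip' (X h) <= c * hnorm ip h)
    & (forall phi (h h1 : H), in_A Om phi -> act Om ev phi h h1 ->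
          act Om ev' phi (X h) (X h1))].

(** Evaluation at [z] is bounded and kills every [phi h] with [phi z = 0], so it
    vanishes on [R_z]. Conversely, if [h(z) = 0], the generating set gives [c]
    with [h - sum_j c_j g_j] in [R_z], hence [sum_j c_j g_j(z) = 0]. As the
    constant functions lie in the module, the same argument shows that the [m]
    vectors [g_j(z)] span [C^m]; so they are free, [c = 0] and [h] lies in [R_z].
    Thus [R_z] is the kernel of evaluation at [z], and the theorem reduces to
    [(X f_i - sum_j psi_ij(z) g_j)(z) = 0], which is the hypothesis on [X f_i]. *)
From HB Require Import structures.
From mathcomp Require Import all_boot all_order all_algebra.
From mathcomp Require Import reals.
From mathcomp Require Import complex.
Set Implicit Arguments. Unset Strict Implicit. Unset Printing Implicit Defensive.
Import Order.TTheory GRing.Theory Num.Theory.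
Local Open Scope ring_scope.

Lemma lincomb_mulmx (R : pzSemiRingType) m n (c : 'I_m -> R) (v : 'I_m -> 'rV[R]_n) :
  \sum_j c j *: v j = (\row_j c j) *m \matrix_j v j.
Proof. by rewrite mulmx_sum_row; apply: eq_bigr => j _; rewrite rowK mxE. Qed.

Lemma spanning_family_free (R : comPzRingType) m (v : 'I_m -> 'rV[R]_m) :
  (forall w, exists d : 'I_m -> R, \sum_j d j *: v j = w) ->
  forall c : 'I_m -> R, \sum_j c j *: v j = 0 -> forall j, c j = 0.
Proof.
move=> v_span c; rewrite lincomb_mulmx => cV0 j.
have [d dV] := fin_all_exists (fun k => v_span 'e_k).
have DV1 : (\matrix_k \row_j d k j) *m (\matrix_j v j) = 1%:M.
  by apply/row_matrixP => k; rewrite row_mul rowK row1 -dV lincomb_mulmx.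
have c0 : \row_j c j = 0.
  by rewrite -[LHS]mulmx1 -(mulmx1C DV1) mulmxA cV0 mul0mx.
by have := congr1 (fun r : 'rV_m => r 0 j) c0; rewrite !mxE.
Qed.

Lemma cabs_eq0 (R : realType) (z : R[i]) : (cabs z == 0) = (z == 0).
Proof.
case: z => a b; rewrite /cabs sqrtr_eq0 /= eq_complex /=.
rewrite -(sqrf_eq0 a) -(sqrf_eq0 b) -paddr_eq0 ?sqr_ge0 //.
by rewrite eq_le addr_ge0 ?sqr_ge0 ?andbT.
Qed.

Lemma vnorm_eq0 (R : realType) k (v : 'rV[R[i]]_k) : (vnorm v == 0) = (v == 0).
Proof.
have sq_ge0 j : 0 <= cabs (v 0 j) ^+ 2 := sqr_ge0 _.
rewrite /vnorm sqrtr_eq0 le_eqVlt ltNge (sumr_ge0 _ (fun j _ => sq_ge0 j)) orbF.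
rewrite (psumr_eq0 _ (fun j _ => sq_ge0 j)).
apply/allP/eqP => [v0 | -> j _]; last by rewrite /= mxE sqrf_eq0 cabs_eq0.
apply/rowP => j; have := v0 j (mem_index_enum j).
by rewrite mxE sqrf_eq0 cabs_eq0 => /eqP.
Qed.

Lemma in_A_cst (R : realType) n (Om : 'rV[R[i]]_n -> Prop) (a : R[i]) :
  in_A Om (fun _ => a).
Proof.
have cabs0 : cabs (0 : R[i]) = 0 by apply/eqP; rewrite cabs_eq0.
move=> e e0; exists (fun _ => True), (fun _ => a); split=> //.
- by move=> z _; exists 1.
- move=> z _; exists 0 => e' e'0; exists 1; split=> // h _.
  rewrite subrr big1 => [|k _]; last by rewrite mxE mul0r.
  by rewrite subrr cabs0 mulr_ge0 ?(ltW e'0) ?sqrtr_ge0.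
- by move=> z _; rewrite subrr cabs0 ltW.
Qed.

Section Evaluation.

Variables (R : realType) (n m : nat) (H : lmodType R[i]).
Variable ev : H -> 'rV[R[i]]_n -> 'rV[R[i]]_m.
Hypothesis ev_linear :
  forall (a : R[i]) (x y : H) z, ev (a *: x + y) z = a *: ev x z + ev y z.

Lemma ev0 z : ev 0 z = 0.
Proof.
have := ev_linear 1 0 0 z; rewrite scaler0 addr0 scale1r => ev0_twice.
by apply: (addrI (ev 0 z)); rewrite addr0 -ev0_twice.
Qed.

Lemma evD z x y : ev (x + y) z = ev x z + ev y z.
Proof. by have := ev_linear 1 x y z; rewrite !scale1r. Qed.

Lemma evZ z a x : ev (a *: x) z = a *: ev x z.
Proof. by rewrite -[a *: x]addr0 ev_linear ev0 addr0. Qed.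

Lemma evB z x y : ev (x - y) z = ev x z - ev y z.
Proof. by rewrite evD -scaleN1r evZ scaleN1r. Qed.

Lemma ev_lincomb z k (c : 'I_k -> R[i]) (F : 'I_k -> H) :
  ev (\sum_l c l *: F l) z = \sum_l c l *: ev (F l) z.
Proof.
rewrite (big_morph (ev^~ z) (evD z) (ev0 z)).
by apply: eq_bigr => l _; apply: evZ.
Qed.

End Evaluation.

Section Localisation.

Variables (R : realType) (n m : nat) (Om : 'rV[R[i]]_n -> Prop).
Variables (H : lmodType R[i]) (ip : H -> H -> R[i]).
Variable ev : H -> 'rV[R[i]]_n -> 'rV[R[i]]_m.
Hypothesis ev_linear :
  forall (a : R[i]) (x y : H) z, ev (a *: x + y) z = a *: ev x z + ev y z.
Hypothesis ev_locally_bounded :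
  forall z, Om z -> exists (r c : R), 0 < r /\ forall w, Om w -> vnorm (w - z) < r ->
    forall h : H, vnorm (ev h w) <= c * hnorm ip h.

Lemma ev_bounded z :
  Om z -> exists2 K : R, 0 < K & forall h, vnorm (ev h z) <= K * hnorm ip h.
Proof.
move=> Oz; have [r [c [r0 bdd]]] := ev_locally_bounded Oz.
exists (`|c| + 1) => [|h]; first by rewrite ltr_pwDr.
have vnorm0 : vnorm (z - z) = 0 by apply/eqP; rewrite subrr vnorm_eq0.
apply: le_trans (bdd _ Oz _ h) _; first by rewrite vnorm0.
by rewrite ler_wpM2r ?sqrtr_ge0 // (le_trans (ler_norm c)) ?lerDl.
Qed.

Lemma in_Rz_ev_eq0 z h : Om z -> in_Rz Om ip ev z h -> ev h z = 0.
Proof.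
move=> Oz h_Rz; have [K K0 bddK] := ev_bounded Oz.
apply/eqP; rewrite -vnorm_eq0 eq_le sqrtr_ge0 andbT.
apply/ler_addgt0Pr => e e0; rewrite add0r.
have [k [phi [c [g [g' [g'_def approx]]]]]] := h_Rz (e / K) (divr_gt0 e0 K0).
have sum_z0 : ev (\sum_l c l *: g' l) z = 0.
  rewrite ev_lincomb // big1 // => l _; have [_ phi_z0 g'_phi] := g'_def l.
  by rewrite g'_phi // phi_z0 scale0r scaler0.
rewrite -[ev h z]subr0 -sum_z0 -evB //; apply: le_trans (bddK _) _.
by rewrite -ler_pdivlMl // mulrC ltW.
Qed.

Hypothesis ev_onto_A :
  forall F : 'rV[R[i]]_n -> 'rV[R[i]]_m, (forall j, in_A Om (fun z => F z 0 j)) ->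
    exists h : H, forall z, Om z -> ev h z = F z.
Variable g : 'I_m -> H.
Hypothesis g_span_mod_Rz :
  forall z, Om z -> forall h : H, exists c : 'I_m -> R[i],
    in_Rz Om ip ev z (h - \sum_(j < m) c j *: g j).

Lemma ev_generators_span z (v : 'rV[R[i]]_m) :
  Om z -> exists d : 'I_m -> R[i], \sum_j d j *: ev (g j) z = v.
Proof.
move=> Oz; have [u u_v] := ev_onto_A (F := fun _ => v) (fun j => in_A_cst Om (v 0 j)).
have [d u_d] := g_span_mod_Rz Oz u; exists d.
by have := in_Rz_ev_eq0 Oz u_d; rewrite evB // ev_lincomb // u_v // => /subr0_eq.
Qed.

Lemma ev_eq0_in_Rz z h : Om z -> ev h z = 0 -> in_Rz Om ip ev z h.
Proof.
move=> Oz h_z0; have [c h_c] := g_span_mod_Rz Oz h.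
have c0 : forall j, c j = 0.
  apply: (@spanning_family_free _ _ (fun j => ev (g j) z)) => [v|].
    exact: ev_generators_span.
  have := in_Rz_ev_eq0 Oz h_c.
  by rewrite evB // ev_lincomb // h_z0 sub0r => /eqP; rewrite oppr_eq0 => /eqP.
by move: h_c; rewrite big1 ?subr0 // => j _; rewrite c0 scale0r.
Qed.

End Localisation.

(* The identity (X (x) 1)(f_i (x) 1_z) = sum_j psi_ij(z) (g_j (x) 1_z) in
   R' (x)_{A(Omega)} C_z = R'/R'_z, with (X (x) 1)[h] := [X h], is the
   statement X f_i - sum_j psi_ij(z) g_j \in R'_z. *)
Theorem lemma6 (R : realType) (n m : nat) (Om : 'rV[R[i]]_n -> Prop)
  (H : lmodType R[i]) (ip : H -> H -> R[i]) (ev : H -> 'rV[R[i]]_n -> 'rV[R[i]]_m)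
  (H' : lmodType R[i]) (ip' : H' -> H' -> R[i]) (ev' : H' -> 'rV[R[i]]_n -> 'rV[R[i]]_m)
  (f : 'I_m -> H) (g : 'I_m -> H') (X : H -> H')
  (Psi : 'I_m -> 'I_m -> 'rV[R[i]]_n -> R[i]) :
  bounded_domain Om ->
  is_qfhm Om ip ev -> is_qfhm Om ip' ev' ->
  is_generating Om ip ev f -> is_generating Om ip' ev' g ->
  is_module_map Om ip ev ip' ev' X ->
  Hol_m Om Psi ->
  (forall i z, Om z -> ev' (X (f i)) z = \sum_(j < m) Psi i j z *: ev' (g j) z) ->
  forall z, Om z -> forall i : 'I_m,
    in_Rz Om ip' ev' z (X (f i) - \sum_(j < m) Psi i j z *: g j).
Proof.
move=> _ _ [_ [ev'_linear [ev'_onto_A [_ [ev'_bounded _]]]]] _ [_ _ g_span] _ _.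
move=> Xf_ev z Oz i.
apply: (ev_eq0_in_Rz ev'_linear ev'_bounded ev'_onto_A g_span Oz).
by rewrite evB // ev_lincomb // Xf_ev // subrr.
Qed.
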